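(* Let $f$ be the map defined in the context. Then: (i) $f$ is continuous at every nega-$Q$-irrational point of $[a_0-1,a_0]$; (ii) if $q_n=q$ for all positive integers $n$, then $f$ is continuous at every point of $[a_0-1,a_0]$ (including all nega-$Q$-rational points); (iii) if $x_0=\Delta^{-Q}_{\varepsilon_1\ldots\varepsilon_{m-1}\varepsilon_m[q_{m+1}-1]0[q_{m+3}-1]0[q_{m+5}-1]\ldots}=\Delta^{-Q}_{\varepsilon_1\ldots\varepsilon_{m-1}[\varepsilon_m-1]0[q_{m+2}-1]0[q_{m+4}-1]0\ldots}$ (with $\varepsilon_m\ge 1$) is a nega-$Q$-rational point and there exists a positive integer $n>m$ with $q_n<q$, then $x_0$ is a point of discontinuity of $f$.
   Context: Let $Q=(q_k)_{k\ge1}$ be a sequence of integers with $q_k\ge 2$, and let $q\ge 2$ be an integer with $q_k\le q$ for all $k$. Put $a_0=\sum_{k\ge1}\frac{q_{2k}-1}{q_1q_2\cdots q_{2k}}$. Every $x\in[a_0-1,a_0]$ can be written as an alternating Cantor series (nega-$Q$-representation) $x=\Delta^{-Q}_{\varepsilon_1\varepsilon_2\ldots}:=\sum_{k\ge1}\frac{(-1)^k\varepsilon_k}{q_1q_2\cdots q_k}$ with digits $\varepsilon_k\in\{0,1,\ldots,q_k-1\}$. A point is called nega-$Q$-rational if it has two representations, namely $\Delta^{-Q}_{\varepsilon_1\ldots\varepsilon_{m-1}\varepsilon_m[q_{m+1}-1]0[q_{m+3}-1]0[q_{m+5}-1]\ldots}=\Delta^{-Q}_{\varepsilon_1\ldots\varepsilon_{m-1}[\varepsilon_m-1]0[q_{m+2}-1]0[q_{m+4}-1]0\ldots}$;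 all other points (nega-$Q$-irrational) have a unique representation. Convention: for nega-$Q$-rational points, only the first of these two representations (the one ending in $\varepsilon_m[q_{m+1}-1]0[q_{m+3}-1]0\ldots$) is used. The nega-$q$-ary representation is $\Delta^{-q}_{\alpha_1\alpha_2\ldots}:=\sum_{k\ge1}\frac{\alpha_k}{(-q)^k}$ with $\alpha_k\in\{0,\ldots,q-1\}$. The map $f:[a_0-1,a_0]\to\mathbb R$ is defined by $f\left(\Delta^{-Q}_{\varepsilon_1\varepsilon_2\ldots}\right)=\Delta^{-q}_{\varepsilon_1\varepsilon_2\ldots}=\sum_{n\ge1}\frac{\varepsilon_n}{(-q)^n}$. *)

From Stdlib Require Import Reals Lra Lia Arith ClassicalEpsilon.
Open Scope R_scope.

(* A sequence Q = (q_k)_{k>=1} is a function nat -> nat; the value at 0 is unused.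
   Digit sequences eps = (eps_k)_{k>=1} are functions nat -> nat; eps 0 is unused. *)

Fixpoint Qprod (Q : nat -> nat) (n : nat) : R :=
  match n with
  | O => 1
  | S k => Qprod Q k * INR (Q (S k))
  end.

(* The sum of a series sum_{k>=0} u k (chosen by classical choice; it is the
   genuine sum whenever the series converges). *)
Definition series_sum (u : nat -> R) : R :=
  epsilon (inhabits 0) (fun l => infinite_sum u l).

Definition admissible (Q : nat -> nat) (e : nat -> nat) : Prop :=
  forall k, (1 <= k)%nat -> (e k < Q k)%nat.

Definition negaQ_term (Q : nat -> nat) (e : nat -> nat) (k : nat) : R :=
  (-1) ^ k * INR (e k) / Qprod Q k.

Definition negaQ_repr (Q : nat -> nat) (e : nat -> nat) (x : R) : Prop :=
  admissible Q e /\ infinite_sum (fun k => negaQ_term Q e (S k)) x.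

Definition negaQ_value (Q : nat -> nat) (e : nat -> nat) : R :=
  series_sum (fun k => negaQ_term Q e (S k)).

Definition negaq_value (q : nat) (a : nat -> nat) : R :=
  series_sum (fun k => INR (a (S k)) / (- INR q) ^ (S k)).

Definition a0 (Q : nat -> nat) : R :=
  series_sum (fun k => INR (Q (2 * S k) - 1)%nat / Qprod Q (2 * S k)).

Definition in_dom (Q : nat -> nat) (x : R) : Prop := a0 Q - 1 <= x <= a0 Q.

Definition negaQ_rational (Q : nat -> nat) (x : R) : Prop :=
  exists e1 e2, negaQ_repr Q e1 x /\ negaQ_repr Q e2 x /\
    exists k, (1 <= k)%nat /\ e1 k <> e2 k.

(* e is of the second form
     e_1 ... e_{m-1} [e_m - 1] 0 [q_{m+2}-1] 0 [q_{m+4}-1] 0 ...   (m >= 1, 1 <= e_m <= q_m - 1),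
   i.e. digit at m is <= q_m - 2 and afterwards the digits are 0, q_{m+2}-1, 0, q_{m+4}-1, ... *)
Definition second_form (Q : nat -> nat) (e : nat -> nat) : Prop :=
  exists m, (1 <= m)%nat /\ (e m + 1 < Q m)%nat /\
    forall j, (1 <= j)%nat ->
      e (m + 2 * j - 1)%nat = 0%nat /\ e (m + 2 * j)%nat = (Q (m + 2 * j) - 1)%nat.

(* The representation used for x under the convention: the (unique) representation
   that is not of the second form. *)
Definition chosen_repr (Q : nat -> nat) (x : R) : nat -> nat :=
  epsilon (inhabits (fun _ => 0%nat))
    (fun e => negaQ_repr Q e x /\ ~ second_form Q e).

Definition fQ (Q : nat -> nat) (q : nat) (x : R) : R :=
  negaq_value q (chosen_repr Q x).

Definition cont_rel (D : R -> Prop) (g : R -> R) (x0 : R) : Prop :=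
  forall eps, 0 < eps -> exists delta, 0 < delta /\
    forall x, D x -> Rabs (x - x0) < delta -> Rabs (g x - g x0) < eps.

Definition first_form_seq (Q : nat -> nat) (e : nat -> nat) (m : nat) : nat -> nat :=
  fun k => if (k <=? m)%nat then e k
           else if Nat.odd (k - m) then (Q k - 1)%nat else 0%nat.

(* The tail t_n of an expansion after n digits satisfies q_{n+1} t_n = -(e_{n+1} + t_{n+1}) and
   ranges over an interval [m_n, M_n] of length exactly 1, so expansions sharing n digits have
   values within 1/(q_1...q_n) <= 2^-n, both for Q and for the constant base q; this makes f
   continuous wherever small perturbations of x cannot change the digits of its expansion.
   A digit can only jump when the tail behind it is extremal, and an extremal tail produces a
   second expansion; so at nega-Q-irrational points the digits are locally stable, and when
   q_n = q for all n the map f is simply the identity.  At a nega-Q-rational point x_0 the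
   truncations of its two expansions approach x_0, and their images approach the values of the
   two expansions in base q; these differ by a multiple of 1 - sum_k (q_{m+k}-1)/q^k, which is
   positive as soon as some later q_n < q. *)

From Stdlib Require Import Reals Lra Lia Arith ClassicalEpsilon FunctionalExtensionality.
From Coquelicot Require Import Coquelicot.
Open Scope R_scope.

Definition bases_ge2 (Q : nat -> nat) : Prop := forall k, (1 <= k)%nat -> (2 <= Q k)%nat.

Definition shift (f : nat -> nat) (n : nat) : nat -> nat := fun j => f (n + j)%nat.

Lemma shift_shift (f : nat -> nat) n : shift (shift f n) 1 = shift f (S n).
Proof. apply functional_extensionality; intros j; unfold shift; f_equal; lia. Qed.

Lemma bases_ge2_shift Q n : bases_ge2 Q -> bases_ge2 (shift Q n).
Proof. intros HQ k Hk; apply HQ; lia. Qed.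

Lemma admissible_shift Q e n : admissible Q e -> admissible (shift Q n) (shift e n).
Proof. intros He k Hk; apply He; lia. Qed.

Lemma INR_base_ge2 Q k : bases_ge2 Q -> (1 <= k)%nat -> 2 <= INR (Q k).
Proof. intros HQ Hk; pose proof (le_INR _ _ (HQ k Hk)) as H; simpl in H; lra. Qed.

Lemma Qprod_ge_pow2 Q n : bases_ge2 Q -> 2 ^ n <= Qprod Q n.
Proof.
  intros HQ; induction n as [|n IH]; simpl; [lra|].
  pose proof (INR_base_ge2 Q (S n) HQ ltac:(lia)).
  pose proof (pow_lt 2 n ltac:(lra)). nra.
Qed.

Lemma Qprod_pos Q n : bases_ge2 Q -> 0 < Qprod Q n.
Proof.
  intros HQ; pose proof (Qprod_ge_pow2 Q n HQ); pose proof (pow_lt 2 n ltac:(lra)); lra.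
Qed.

Lemma Qprod_shift Q n j : Qprod Q (n + j) = Qprod Q n * Qprod (shift Q n) j.
Proof.
  induction j as [|j IH]; simpl; [rewrite Nat.add_0_r; ring|].
  rewrite Nat.add_succ_r; simpl; rewrite IH; unfold shift; rewrite Nat.add_succ_r; ring.
Qed.

Lemma Qprod_ext Q Q' n : (forall k, (1 <= k)%nat -> Q k = Q' k) -> Qprod Q n = Qprod Q' n.
Proof. intros HQQ'; induction n as [|n IH]; simpl; [|rewrite IH, HQQ' by lia]; reflexivity. Qed.

(** * Values of nega-Q-expansions *)

Definition negaQ_sum (Q e : nat -> nat) : R := Series (fun k => negaQ_term Q e (S k)).

Lemma negaQ_term_abs_le Q e k : bases_ge2 Q -> admissible Q e ->
  Rabs (negaQ_term Q e (S k)) <= (/ 2) ^ k.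
Proof.
  intros HQ He.
  pose proof (Qprod_pos Q k HQ). pose proof (Qprod_ge_pow2 Q k HQ).
  pose proof (INR_base_ge2 Q (S k) HQ ltac:(lia)).
  assert (Hd : INR (e (S k)) <= INR (Q (S k))) by (apply le_INR; specialize (He (S k)); lia).
  pose proof (pos_INR (e (S k))).
  replace (Rabs (negaQ_term Q e (S k)))
    with (INR (e (S k)) / INR (Q (S k)) * / Qprod Q k).
  2:{ unfold negaQ_term, Rdiv; simpl Qprod.
      rewrite !Rabs_mult, pow_1_abs, Rabs_right, Rabs_right; [field; lra|..].
      all: apply Rle_ge; try apply Rlt_le, Rinv_0_lt_compat; nra. }
  rewrite pow_inv.
  apply Rle_trans with (1 * / Qprod Q k).
  - apply Rmult_le_compat_r; [apply Rlt_le, Rinv_0_lt_compat; lra|].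
    apply Rmult_le_reg_r with (INR (Q (S k))); [lra|]. unfold Rdiv.
    rewrite Rmult_assoc, Rinv_l; lra.
  - rewrite Rmult_1_l; apply Rinv_le_contravar; [apply pow_lt|]; lra.
Qed.

Lemma ex_series_negaQ Q e : bases_ge2 Q -> admissible Q e ->
  ex_series (fun k => negaQ_term Q e (S k)).
Proof.
  intros HQ He. apply (@ex_series_le R_AbsRing R_CompleteNormedModule _ (fun k => (/ 2) ^ k)).
  - intros k; apply negaQ_term_abs_le; auto.
  - apply ex_series_geom; rewrite Rabs_right; lra.
Qed.

Lemma negaQ_sum_ext Q e e' : (forall k, (1 <= k)%nat -> e k = e' k) ->
  negaQ_sum Q e = negaQ_sum Q e'.
Proof.
  intros Hee'; apply Series_ext; intros k; unfold negaQ_term; rewrite Hee' by lia; reflexivity.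
Qed.

Lemma negaQ_sum_ext_bases Q Q' e : (forall k, (1 <= k)%nat -> Q k = Q' k) ->
  negaQ_sum Q e = negaQ_sum Q' e.
Proof.
  intros HQQ'; apply Series_ext; intros k; unfold negaQ_term.
  rewrite (Qprod_ext Q Q') by auto; reflexivity.
Qed.

Lemma series_sum_eq u l : is_series u l -> series_sum u = l.
Proof.
  intros Hu. unfold series_sum.
  pose proof (epsilon_spec (inhabits 0) (fun l => infinite_sum u l)
    (ex_intro _ l (proj1 (is_series_Reals u l) Hu))) as Hl; simpl in Hl.
  apply is_series_Reals, is_series_unique in Hl. apply is_series_unique in Hu. congruence.
Qed.

Lemma negaQ_value_eq Q e : bases_ge2 Q -> admissible Q e -> negaQ_value Q e = negaQ_sum Q e.
Proof. intros HQ He; apply series_sum_eq, Series_correct, ex_series_negaQ; auto. Qed.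

Lemma negaQ_repr_iff Q e x : bases_ge2 Q ->
  (negaQ_repr Q e x <-> admissible Q e /\ negaQ_sum Q e = x).
Proof.
  intros HQ; split.
  - intros [He Hx]; split; auto. apply is_series_Reals, is_series_unique in Hx; exact Hx.
  - intros [He Hx]; split; auto. apply is_series_Reals; rewrite <- Hx.
    apply Series_correct, ex_series_negaQ; auto.
Qed.

Lemma negaQ_sum_step Q e : bases_ge2 Q -> admissible Q e ->
  INR (Q 1%nat) * negaQ_sum Q e = - (INR (e 1%nat) + negaQ_sum (shift Q 1) (shift e 1)).
Proof.
  intros HQ He. pose proof (INR_base_ge2 Q 1 HQ ltac:(lia)).
  unfold negaQ_sum at 1. rewrite Series_incr_1 by (apply ex_series_negaQ; auto).
  rewrite (Series_ext _ (fun k => (- / INR (Q 1%nat)) * negaQ_term (shift Q 1) (shift e 1) (S k))).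
  - rewrite Series_scal_l. fold (negaQ_sum (shift Q 1) (shift e 1)). unfold negaQ_term; simpl. field; lra.
  - intros k. unfold negaQ_term.
    change (Qprod Q (S (S k))) with (Qprod Q (1 + S k)). rewrite Qprod_shift.
    pose proof (Qprod_pos (shift Q 1) (S k) (bases_ge2_shift Q 1 HQ)).
    change (shift e 1 (S k)) with (e (S (S k))). simpl pow; simpl (Qprod Q 1). field; lra.
Qed.

Definition tail_sum (Q e : nat -> nat) (n : nat) : R := negaQ_sum (shift Q n) (shift e n).

Lemma tail_sum_step Q e n : bases_ge2 Q -> admissible Q e ->
  INR (Q (S n)) * tail_sum Q e n = - (INR (e (S n)) + tail_sum Q e (S n)).
Proof.
  intros HQ He. unfold tail_sum.
  replace (Q (S n)) with (shift Q n 1) by (unfold shift; f_equal; lia).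
  replace (e (S n)) with (shift e n 1) by (unfold shift; f_equal; lia).
  rewrite negaQ_sum_step, !shift_shift; auto using bases_ge2_shift, admissible_shift.
Qed.

Lemma sub_of_tail_recursion Q (t s : nat -> R) n : bases_ge2 Q ->
  (forall k, (k < n)%nat -> INR (Q (S k)) * (t k - s k) = - (t (S k) - s (S k))) ->
  t O - s O = (-1) ^ n * (t n - s n) / Qprod Q n.
Proof.
  intros HQ; induction n as [|n IH]; intros Hrec; [simpl; field|].
  rewrite IH by (intros; apply Hrec; lia).
  pose proof (Hrec n ltac:(lia)). pose proof (INR_base_ge2 Q (S n) HQ ltac:(lia)).
  pose proof (Qprod_pos Q n HQ).
  replace (t (S n) - s (S n)) with (- (INR (Q (S n)) * (t n - s n))) by lra.
  simpl; field; lra.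
Qed.

Lemma negaQ_sum_sub_prefix Q e e' n : bases_ge2 Q -> admissible Q e -> admissible Q e' ->
  (forall k, (1 <= k <= n)%nat -> e k = e' k) ->
  negaQ_sum Q e - negaQ_sum Q e' = (-1) ^ n * (tail_sum Q e n - tail_sum Q e' n) / Qprod Q n.
Proof.
  intros HQ He He' Hpre.
  change (tail_sum Q e 0 - tail_sum Q e' 0 = (-1) ^ n * (tail_sum Q e n - tail_sum Q e' n) / Qprod Q n).
  apply sub_of_tail_recursion; auto.
  intros k Hk. rewrite Rmult_minus_distr_l, !tail_sum_step, Hpre by (auto; lia). ring.
Qed.

(** * Extremal expansions *)

Lemma Series_zero : Series (fun _ => 0) = 0.
Proof.
  rewrite (Series_ext _ (fun _ => 0 * 0)) by (intros; ring).
  rewrite Series_scal_l; ring.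
Qed.

Lemma Series_nonneg (w : nat -> R) : (forall k, 0 <= w k) -> ex_series w -> 0 <= Series w.
Proof.
  intros Hw Hex. rewrite <- Series_zero. apply Series_le; auto. intros k; split; [lra|auto].
Qed.

Lemma Series_pos (w : nat -> R) j : (forall k, 0 <= w k) -> 0 < w j -> ex_series w ->
  0 < Series w.
Proof.
  intros Hw Hj Hex. rewrite (Series_incr_n w (S j)) by (auto; lia). simpl pred.
  assert (w j <= sum_f_R0 w j).
  { destruct j as [|j]; simpl; [lra|]. pose proof (cond_pos_sum w j Hw); lra. }
  assert (0 <= Series (fun k => w (S j + k)%nat)).
  { apply Series_nonneg; [intros; apply Hw|]. exact (proj1 (ex_series_incr_n w (S j)) Hex). }
  lra.
Qed.

Lemma Series_le_compat (u v : nat -> R) : (forall k, u k <= v k) ->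
  ex_series u -> ex_series v -> Series u <= Series v.
Proof.
  intros Huv Hu Hv.
  assert (0 <= Series (fun k => v k - u k)).
  { apply Series_nonneg; [intros k; specialize (Huv k); lra|exact (ex_series_minus v u Hv Hu)]. }
  rewrite Series_minus in H; auto; lra.
Qed.

Lemma Series_lt_compat (u v : nat -> R) j : (forall k, u k <= v k) -> u j < v j ->
  ex_series u -> ex_series v -> Series u < Series v.
Proof.
  intros Huv Hj Hu Hv.
  assert (0 < Series (fun k => v k - u k)).
  { apply (Series_pos _ j); [intros k; specialize (Huv k); lra|lra|].
    exact (ex_series_minus v u Hv Hu). }
  rewrite Series_minus in H; auto; lra.
Qed.

Lemma pow_neg1_even n : Nat.even n = true -> (-1) ^ n = 1.
Proof. intros H; apply Nat.even_spec in H; destruct H as [m ->]; apply pow_1_even. Qed.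

Lemma pow_neg1_odd n : Nat.even n = false -> (-1) ^ n = -1.
Proof.
  intros H. assert (Hodd : Nat.odd n = true) by (rewrite <- Nat.negb_even, H; reflexivity).
  apply Nat.odd_spec in Hodd; destruct Hodd as [m ->]; rewrite Nat.add_1_r; apply pow_1_odd.
Qed.

(* [top_digits Q] is 0 [q_2-1] 0 [q_4-1] ..., the expansion of a_0, and [bot_digits Q] is
   [q_1-1] 0 [q_3-1] 0 ..., that of a_0 - 1. *)
Definition top_digits (Q : nat -> nat) (k : nat) : nat :=
  if Nat.even k then (Q k - 1)%nat else 0%nat.
Definition bot_digits (Q : nat -> nat) (k : nat) : nat :=
  if Nat.even k then 0%nat else (Q k - 1)%nat.

Lemma admissible_top_digits Q Q' : bases_ge2 Q ->
  (forall k, (1 <= k)%nat -> (Q' k <= Q k)%nat) -> admissible Q (top_digits Q').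
Proof.
  intros HQ HQ' k Hk. specialize (HQ k Hk); specialize (HQ' k Hk).
  unfold top_digits; destruct (Nat.even k); lia.
Qed.

Lemma admissible_bot_digits Q Q' : bases_ge2 Q ->
  (forall k, (1 <= k)%nat -> (Q' k <= Q k)%nat) -> admissible Q (bot_digits Q').
Proof.
  intros HQ HQ' k Hk. specialize (HQ k Hk); specialize (HQ' k Hk).
  unfold bot_digits; destruct (Nat.even k); lia.
Qed.

Lemma negaQ_term_le_top Q e k : bases_ge2 Q -> admissible Q e ->
  negaQ_term Q e (S k) <= negaQ_term Q (top_digits Q) (S k).
Proof.
  intros HQ He. pose proof (Rinv_0_lt_compat _ (Qprod_pos Q (S k) HQ)).
  specialize (He (S k) ltac:(lia)). pose proof (pos_INR (e (S k))).
  unfold negaQ_term, top_digits, Rdiv. destruct (Nat.even (S k)) eqn:E.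
  - rewrite pow_neg1_even by auto.
    assert (INR (e (S k)) <= INR (Q (S k) - 1)) by (apply le_INR; lia). nra.
  - rewrite pow_neg1_odd by auto. change (INR 0) with 0. nra.
Qed.

Lemma negaQ_term_ge_bot Q e k : bases_ge2 Q -> admissible Q e ->
  negaQ_term Q (bot_digits Q) (S k) <= negaQ_term Q e (S k).
Proof.
  intros HQ He. pose proof (Rinv_0_lt_compat _ (Qprod_pos Q (S k) HQ)).
  specialize (He (S k) ltac:(lia)). pose proof (pos_INR (e (S k))).
  unfold negaQ_term, bot_digits, Rdiv. destruct (Nat.even (S k)) eqn:E.
  - rewrite pow_neg1_even by auto. change (INR 0) with 0. nra.
  - rewrite pow_neg1_odd by auto.
    assert (INR (e (S k)) <= INR (Q (S k) - 1)) by (apply le_INR; lia). nra.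
Qed.

Lemma negaQ_sum_le_top Q e : bases_ge2 Q -> admissible Q e ->
  negaQ_sum Q e <= negaQ_sum Q (top_digits Q).
Proof.
  intros HQ He. apply Series_le_compat; [intros; apply negaQ_term_le_top; auto|..];
    apply ex_series_negaQ; auto using admissible_top_digits.
Qed.

Lemma negaQ_sum_ge_bot Q e : bases_ge2 Q -> admissible Q e ->
  negaQ_sum Q (bot_digits Q) <= negaQ_sum Q e.
Proof.
  intros HQ He. apply Series_le_compat; [intros; apply negaQ_term_ge_bot; auto|..];
    apply ex_series_negaQ; auto using admissible_bot_digits.
Qed.

Lemma negaQ_sum_zero Q : negaQ_sum Q (fun _ => 0%nat) = 0.
Proof.
  rewrite <- Series_zero. apply Series_ext; intros k.
  unfold negaQ_term; change (INR 0) with 0; unfold Rdiv; ring.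
Qed.

Definition tail_max (Q : nat -> nat) (n : nat) : R :=
  negaQ_sum (shift Q n) (top_digits (shift Q n)).
Definition tail_min (Q : nat -> nat) (n : nat) : R :=
  negaQ_sum (shift Q n) (bot_digits (shift Q n)).

Lemma tail_sum_bounds Q e n : bases_ge2 Q -> admissible Q e ->
  tail_min Q n <= tail_sum Q e n <= tail_max Q n.
Proof.
  intros HQ He. split; [apply negaQ_sum_ge_bot|apply negaQ_sum_le_top];
    auto using bases_ge2_shift, admissible_shift.
Qed.

Lemma shift_top_digits Q : shift (top_digits Q) 1 = bot_digits (shift Q 1).
Proof.
  apply functional_extensionality; intros j. unfold shift, top_digits, bot_digits.
  simpl (1 + j)%nat. rewrite Nat.even_succ, <- Nat.negb_even. destruct (Nat.even j); reflexivity.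
Qed.

Lemma shift_bot_digits Q : shift (bot_digits Q) 1 = top_digits (shift Q 1).
Proof.
  apply functional_extensionality; intros j. unfold shift, top_digits, bot_digits.
  simpl (1 + j)%nat. rewrite Nat.even_succ, <- Nat.negb_even. destruct (Nat.even j); reflexivity.
Qed.

Lemma tail_max_step Q n : bases_ge2 Q -> INR (Q (S n)) * tail_max Q n = - tail_min Q (S n).
Proof.
  intros HQ. unfold tail_max, tail_min.
  replace (Q (S n)) with (shift Q n 1) by (unfold shift; f_equal; lia).
  rewrite negaQ_sum_step, shift_top_digits, shift_shift;
    auto using bases_ge2_shift, admissible_top_digits.
  unfold top_digits at 1; simpl; ring.
Qed.

Lemma tail_min_step Q n : bases_ge2 Q ->
  INR (Q (S n)) * tail_min Q n = - (INR (Q (S n)) - 1 + tail_max Q (S n)).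
Proof.
  intros HQ. unfold tail_max, tail_min.
  assert (HQn : (2 <= Q (S n))%nat) by (apply HQ; lia).
  replace (Q (S n)) with (shift Q n 1) in * by (unfold shift; f_equal; lia).
  rewrite negaQ_sum_step, shift_bot_digits, shift_shift;
    auto using bases_ge2_shift, admissible_bot_digits.
  unfold bot_digits at 1; simpl Nat.even; cbv iota. rewrite minus_INR by lia; simpl; ring.
Qed.

Lemma negaQ_term_top_sub_bot Q Q' k :
  negaQ_term Q (top_digits Q') k - negaQ_term Q (bot_digits Q') k = INR (Q' k - 1) / Qprod Q k.
Proof.
  unfold negaQ_term, top_digits, bot_digits, Rdiv.
  destruct (Nat.even k) eqn:E; [rewrite pow_neg1_even | rewrite pow_neg1_odd]; auto;
    change (INR 0) with 0; ring.
Qed.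

Lemma negaQ_sum_top_sub_bot Q Q' : bases_ge2 Q -> (forall k, (1 <= k)%nat -> (Q' k <= Q k)%nat) ->
  negaQ_sum Q (top_digits Q') - negaQ_sum Q (bot_digits Q')
  = Series (fun k => INR (Q' (S k) - 1) / Qprod Q (S k)).
Proof.
  intros HQ HQ'. unfold negaQ_sum.
  rewrite <- Series_minus by (apply ex_series_negaQ; auto using admissible_top_digits,
    admissible_bot_digits).
  apply Series_ext; intros k; apply negaQ_term_top_sub_bot.
Qed.

(* The digit ranges [0, q_k - 1] tile: (q_k - 1)/(q_1...q_k) = 1/(q_1...q_{k-1}) - 1/(q_1...q_k). *)
Lemma is_series_base_telescoping Q : bases_ge2 Q ->
  is_series (fun k => INR (Q (S k) - 1) / Qprod Q (S k)) 1.
Proof.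
  intros HQ.
  assert (Hpartial : forall n, sum_f_R0 (fun k => INR (Q (S k) - 1) / Qprod Q (S k)) n
                               = 1 - / Qprod Q (S n)).
  { induction n as [|n IH].
    - pose proof (HQ 1%nat ltac:(lia)). pose proof (INR_base_ge2 Q 1 HQ ltac:(lia)).
      simpl. rewrite minus_INR by lia. simpl. field; lra.
    - rewrite tech5, IH. pose proof (HQ (S (S n)) ltac:(lia)).
      pose proof (INR_base_ge2 Q (S (S n)) HQ ltac:(lia)). pose proof (Qprod_pos Q (S n) HQ).
      rewrite minus_INR by lia.
      change (Qprod Q (S (S n))) with (Qprod Q (S n) * INR (Q (S (S n)))).
      simpl (INR 1); field; lra. }
  unfold is_series. change (is_lim_seq (sum_n (fun k => INR (Q (S k) - 1) / Qprod Q (S k))) 1).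
  apply (is_lim_seq_ext (fun n => 1 - / Qprod Q (S n))); [intros; rewrite sum_n_Reals, Hpartial; reflexivity|].
  replace (Finite 1) with (Finite (1 - 0)) by (f_equal; ring).
  apply is_lim_seq_minus'; [apply is_lim_seq_const|].
  apply (is_lim_seq_le_le (fun _ => 0) _ (fun n => (/ 2) ^ S n)).
  - intros n. pose proof (Qprod_pos Q (S n) HQ). pose proof (Qprod_ge_pow2 Q (S n) HQ).
    split; [apply Rlt_le, Rinv_0_lt_compat; lra|].
    rewrite pow_inv. apply Rinv_le_contravar; [apply pow_lt|]; lra.
  - apply is_lim_seq_const.
  - apply (is_lim_seq_incr_1 (fun n => (/ 2) ^ n)), is_lim_seq_geom. rewrite Rabs_right; lra.
Qed.

Lemma tail_max_sub_min Q n : bases_ge2 Q -> tail_max Q n - tail_min Q n = 1.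
Proof.
  intros HQ. unfold tail_max, tail_min.
  rewrite negaQ_sum_top_sub_bot by auto using bases_ge2_shift.
  apply is_series_unique, is_series_base_telescoping, bases_ge2_shift; auto.
Qed.

Lemma tail_min_neg_tail_max_pos Q n : bases_ge2 Q -> tail_min Q n < 0 < tail_max Q n.
Proof.
  intros HQ. pose proof (bases_ge2_shift Q n HQ) as HQn.
  assert (Hzero : admissible (shift Q n) (fun _ => 0%nat)) by (intros k Hk; specialize (HQn k Hk); lia).
  rewrite <- (negaQ_sum_zero (shift Q n)). unfold tail_max, tail_min, negaQ_sum.
  pose proof (Qprod_pos (shift Q n) 1 HQn). pose proof (Qprod_pos (shift Q n) 2 HQn).
  pose proof (HQn 1%nat ltac:(lia)). pose proof (HQn 2%nat ltac:(lia)).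
  pose proof (INR_base_ge2 _ 1 HQn ltac:(lia)). pose proof (INR_base_ge2 _ 2 HQn ltac:(lia)).
  split; [apply (Series_lt_compat _ _ 0) | apply (Series_lt_compat _ _ 1)];
    auto using negaQ_term_ge_bot, negaQ_term_le_top, ex_series_negaQ, admissible_top_digits,
      admissible_bot_digits;
    unfold negaQ_term, top_digits, bot_digits; simpl Nat.even; cbv iota;
    rewrite minus_INR by lia; simpl INR; simpl pow; unfold Rdiv.
  - pose proof (Rinv_0_lt_compat _ H). nra.
  - pose proof (Rinv_0_lt_compat _ H0). nra.
Qed.

(** * The domain and closeness of expansions *)

(* a_0 = sum_k (q_{2k} - 1)/(q_1...q_{2k}) is the series of [top_digits] with its zero terms removed. *)
Lemma a0_eq Q : bases_ge2 Q -> a0 Q = tail_max Q 0.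
Proof.
  intros HQ. change (a0 Q = negaQ_sum Q (top_digits Q)). unfold a0. apply series_sum_eq.
  set (b := fun k => negaQ_term Q (top_digits Q) (S k)).
  set (c := fun k => INR (Q (2 * S k) - 1)%nat / Qprod Q (2 * S k)).
  assert (Hbc : forall i, sum_f_R0 c i = sum_f_R0 b (2 * i + 1)).
  { induction i as [|i IH].
    - pose proof (INR_base_ge2 Q 1 HQ ltac:(lia)). pose proof (INR_base_ge2 Q 2 HQ ltac:(lia)).
      unfold b, c, negaQ_term, top_digits; simpl. field; lra.
    - rewrite tech5, IH. replace (2 * S i + 1)%nat with (S (S (2 * i + 1))) by lia.
      rewrite (tech5 b (S (2 * i + 1))), (tech5 b (2 * i + 1)).
      unfold b, c, negaQ_term, top_digits.
      replace (S (S (S (2 * i + 1)))) with (2 * S (S i))%nat by lia.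
      replace (S (S (2 * i + 1))) with (S (2 * S i))%nat by lia.
      assert (E1 : Nat.even (2 * S (S i)) = true) by (rewrite Nat.even_mul; reflexivity).
      assert (E2 : Nat.even (S (2 * S i)) = false)
        by (rewrite Nat.even_succ, <- Nat.negb_even, Nat.even_mul; reflexivity).
      rewrite E1, E2, (pow_neg1_even _ E1). change (INR 0) with 0.
      pose proof (Qprod_pos Q (S (2 * S i)) HQ). pose proof (Qprod_pos Q (2 * S (S i)) HQ).
      field; lra. }
  unfold is_series. change (is_lim_seq (sum_n c) (negaQ_sum Q (top_digits Q))).
  apply (is_lim_seq_ext (fun i => sum_n b (2 * i + 1))); [intros; rewrite !sum_n_Reals, Hbc; auto|].
  apply (is_lim_seq_subseq (sum_n b) _ (fun i => 2 * i + 1)%nat).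
  - apply eventually_subseq; intros; lia.
  - apply Series_correct, ex_series_negaQ; auto using admissible_top_digits.
Qed.

Lemma in_dom_iff Q x : bases_ge2 Q -> (in_dom Q x <-> tail_min Q 0 <= x <= tail_max Q 0).
Proof.
  intros HQ. unfold in_dom. rewrite a0_eq by auto.
  pose proof (tail_max_sub_min Q 0 HQ). split; intros; lra.
Qed.

Lemma in_dom_negaQ_sum Q e : bases_ge2 Q -> admissible Q e -> in_dom Q (negaQ_sum Q e).
Proof. intros HQ He. apply in_dom_iff; auto. exact (tail_sum_bounds Q e 0 HQ He). Qed.

Lemma pow_half_lt eps : 0 < eps -> exists N, (/ 2) ^ N < eps.
Proof.
  intros Heps. destruct (pow_lt_1_zero (/ 2) ltac:(rewrite Rabs_right; lra) eps Heps) as [N HN].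
  exists N. specialize (HN N (le_n N)).
  rewrite Rabs_right in HN; [exact HN|apply Rle_ge, pow_le; lra].
Qed.

Lemma eq_0_of_abs_le_pow_half a : (forall n, Rabs a <= (/ 2) ^ n) -> a = 0.
Proof.
  intros Ha. destruct (Req_dec a 0) as [E|E]; [exact E|exfalso].
  destruct (pow_half_lt (Rabs a) (Rabs_pos_lt a E)) as [N HN].
  specialize (Ha N); lra.
Qed.

Lemma Rabs_rescaled n a P : 0 < P -> Rabs ((-1) ^ n * a / P) = Rabs a / P.
Proof.
  intros HP. unfold Rdiv. rewrite !Rabs_mult, pow_1_abs, Rmult_1_l.
  rewrite (Rabs_right (/ P)); [reflexivity|apply Rle_ge, Rlt_le, Rinv_0_lt_compat; exact HP].
Qed.


Lemma rescaled_tail_sub_abs_le Q n t s : bases_ge2 Q ->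
  tail_min Q n <= t <= tail_max Q n -> tail_min Q n <= s <= tail_max Q n ->
  Rabs ((-1) ^ n * (t - s) / Qprod Q n) <= (/ 2) ^ n.
Proof.
  intros HQ Ht Hs. pose proof (tail_max_sub_min Q n HQ).
  pose proof (Qprod_pos Q n HQ). pose proof (Qprod_ge_pow2 Q n HQ).
  rewrite Rabs_rescaled, pow_inv by lra. unfold Rdiv.
  apply Rle_trans with (1 * / Qprod Q n).
  - apply Rmult_le_compat_r; [apply Rlt_le, Rinv_0_lt_compat; lra|apply Rabs_le; lra].
  - rewrite Rmult_1_l; apply Rinv_le_contravar; [apply pow_lt|]; lra.
Qed.

Lemma negaQ_sum_close Q e e' n : bases_ge2 Q -> admissible Q e -> admissible Q e' ->
  (forall k, (1 <= k <= n)%nat -> e k = e' k) ->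
  Rabs (negaQ_sum Q e - negaQ_sum Q e') <= (/ 2) ^ n.
Proof.
  intros HQ He He' Hpre. rewrite (negaQ_sum_sub_prefix Q e e' n) by auto.
  apply rescaled_tail_sub_abs_le; auto using tail_sum_bounds.
Qed.

Lemma rescaled_eq_0 n P a : 0 < P -> (-1) ^ n * a / P = 0 -> a = 0.
Proof.
  intros HP H. unfold Rdiv in H. apply Rmult_integral in H as [H|H].
  - apply Rmult_integral in H as [H|H]; [exfalso; exact (pow_nonzero (-1) n ltac:(lra) H)|exact H].
  - exfalso; exact (Rinv_neq_0_compat P ltac:(lra) H).
Qed.

(** * Existence of a representation of the first form *)

Lemma exists_digit n lo hi z : (1 <= n)%nat -> hi - lo = 1 -> lo <= z <= INR n - 1 + hi ->
  exists d, (d < n)%nat /\ lo <= z - INR d <= hi /\ ((d + 1 < n)%nat -> z - INR d < hi).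
Proof.
  intros Hn Hlh; revert Hn z; induction n as [|n IH]; intros Hn z Hz; [lia|].
  rewrite S_INR in Hz.
  destruct (Rle_dec lo (z - INR n)) as [Hle|Hlt].
  - exists n. split; [lia|]. split; [lra|]. intros; lia.
  - destruct (Nat.eq_dec n 0) as [->|Hn0]; [simpl in Hlt; lra|].
    destruct (IH ltac:(lia) z ltac:(lra)) as [d [Hd [Hrange Hstrict]]].
    exists d. split; [lia|]. split; [exact Hrange|]. intros Hdn.
    destruct (Nat.eq_dec (d + 1) n) as [E|E]; [|apply Hstrict; lia].
    assert (INR d = INR n - 1) by (rewrite <- E, plus_INR; simpl; ring). lra.
Qed.

(* The new tail must stay in range, and may be maximal only behind the largest digit; this
   strictness is what rules out the second form. *)
Definition greedy_spec (Q : nat -> nat) (k : nat) (t : R) (d : nat) : Prop :=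
  (d < Q (S k))%nat /\
  tail_min Q (S k) <= - INR (Q (S k)) * t - INR d <= tail_max Q (S k) /\
  ((d + 1 < Q (S k))%nat -> - INR (Q (S k)) * t - INR d < tail_max Q (S k)).

Definition greedy_digit (Q : nat -> nat) (k : nat) (t : R) : nat :=
  epsilon (inhabits 0%nat) (greedy_spec Q k t).

Lemma greedy_digit_spec Q k t : bases_ge2 Q -> tail_min Q k <= t <= tail_max Q k ->
  greedy_spec Q k t (greedy_digit Q k t).
Proof.
  intros HQ Ht. unfold greedy_digit. apply epsilon_spec.
  pose proof (tail_max_step Q k HQ). pose proof (tail_min_step Q k HQ).
  pose proof (INR_base_ge2 Q (S k) HQ ltac:(lia)).
  apply exists_digit; [specialize (HQ (S k)); lia|apply tail_max_sub_min; auto|].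
  split; nra.
Qed.

Section Greedy.
Variables (Q : nat -> nat) (x : R).
Hypothesis HQ : bases_ge2 Q.
Hypothesis Hx : tail_min Q 0 <= x <= tail_max Q 0.

Fixpoint greedy_tail (n : nat) : R :=
  match n with
  | O => x
  | S k => - INR (Q (S k)) * greedy_tail k - INR (greedy_digit Q k (greedy_tail k))
  end.

Definition greedy_digits (k : nat) : nat :=
  match k with O => O | S k' => greedy_digit Q k' (greedy_tail k') end.

Lemma greedy_tail_bounds n : tail_min Q n <= greedy_tail n <= tail_max Q n.
Proof.
  induction n as [|n IH]; [exact Hx|].
  destruct (greedy_digit_spec Q n (greedy_tail n) HQ IH) as [_ [Hrange _]]; exact Hrange.
Qed.

Lemma greedy_digits_spec n : greedy_spec Q n (greedy_tail n) (greedy_digits (S n)).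
Proof. apply greedy_digit_spec, greedy_tail_bounds; auto. Qed.

Lemma admissible_greedy : admissible Q greedy_digits.
Proof. intros [|k] Hk; [lia|]. apply greedy_digits_spec. Qed.

Lemma negaQ_sum_greedy_sub n : negaQ_sum Q greedy_digits - x
  = (-1) ^ n * (tail_sum Q greedy_digits n - greedy_tail n) / Qprod Q n.
Proof.
  change (tail_sum Q greedy_digits 0 - greedy_tail 0
    = (-1) ^ n * (tail_sum Q greedy_digits n - greedy_tail n) / Qprod Q n).
  apply sub_of_tail_recursion; auto. intros k _.
  rewrite Rmult_minus_distr_l, tail_sum_step by auto using admissible_greedy.
  simpl; ring.
Qed.

Lemma negaQ_sum_greedy : negaQ_sum Q greedy_digits = x.
Proof.
  apply Rminus_diag_uniq, eq_0_of_abs_le_pow_half. intros n. rewrite (negaQ_sum_greedy_sub n).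
  apply rescaled_tail_sub_abs_le; auto using tail_sum_bounds, admissible_greedy, greedy_tail_bounds.
Qed.

Lemma tail_sum_greedy n : tail_sum Q greedy_digits n = greedy_tail n.
Proof.
  pose proof (negaQ_sum_greedy_sub n) as H. rewrite negaQ_sum_greedy, Rminus_diag_eq in H by auto.
  apply Rminus_diag_uniq, (rescaled_eq_0 n (Qprod Q n)); auto using Qprod_pos.
Qed.

Lemma greedy_not_second_form : ~ second_form Q greedy_digits.
Proof.
  intros [m [Hm [Hdig Htail]]].
  assert (Htop : tail_sum Q greedy_digits m = tail_max Q m).
  { apply negaQ_sum_ext. intros j Hj. unfold shift, top_digits.
    destruct (Nat.even j) eqn:E.
    - apply Nat.even_spec in E as [i ->]. apply (Htail i); lia.
    - assert (Hodd : Nat.odd j = true) by (rewrite <- Nat.negb_even, E; reflexivity).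
      apply Nat.odd_spec in Hodd as [i ->].
      replace (m + (2 * i + 1))%nat with (m + 2 * S i - 1)%nat by lia. apply (Htail (S i)); lia. }
  destruct m as [|m]; [lia|].
  destruct (greedy_digits_spec m) as [_ [_ Hstrict]].
  rewrite tail_sum_greedy in Htop. specialize (Hstrict Hdig). simpl in Htop, Hstrict. lra.
Qed.

End Greedy.

Lemma chosen_repr_spec Q x : bases_ge2 Q -> in_dom Q x ->
  admissible Q (chosen_repr Q x) /\ negaQ_sum Q (chosen_repr Q x) = x.
Proof.
  intros HQ Hx. apply in_dom_iff in Hx; auto.
  apply negaQ_repr_iff; auto. unfold chosen_repr.
  apply (epsilon_spec (inhabits (fun _ => 0%nat)) (fun e => negaQ_repr Q e x /\ ~ second_form Q e)).
  exists (greedy_digits Q x). split.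
  - apply negaQ_repr_iff; auto using admissible_greedy, negaQ_sum_greedy.
  - apply greedy_not_second_form; auto.
Qed.

(** * Splicing and rigidity of digits *)

Definition splice (e : nat -> nat) (N d : nat) (t : nat -> nat) : nat -> nat :=
  fun k => if (k <=? N)%nat then e k else if (k =? S N)%nat then d else t (k - S N)%nat.

Lemma splice_prefix e N d t k : (k <= N)%nat -> splice e N d t k = e k.
Proof. intros Hk; unfold splice; destruct (Nat.leb_spec k N); [reflexivity|lia]. Qed.

Lemma splice_digit e N d t : splice e N d t (S N) = d.
Proof. unfold splice; destruct (Nat.leb_spec (S N) N); [lia|now rewrite Nat.eqb_refl]. Qed.

Lemma admissible_splice Q e N d t :
  (forall k, (1 <= k <= N)%nat -> (e k < Q k)%nat) -> (d < Q (S N))%nat ->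
  admissible (shift Q (S N)) t -> admissible Q (splice e N d t).
Proof.
  intros He Hd Ht k Hk. unfold splice.
  destruct (Nat.leb_spec k N); [apply He; lia|].
  destruct (Nat.eqb_spec k (S N)) as [->|Hne]; [exact Hd|].
  specialize (Ht (k - S N)%nat ltac:(lia)). unfold shift in Ht.
  replace (S N + (k - S N))%nat with k in Ht by lia. exact Ht.
Qed.

Lemma tail_sum_splice Q e N d t :
  tail_sum Q (splice e N d t) (S N) = negaQ_sum (shift Q (S N)) t.
Proof.
  apply negaQ_sum_ext; intros j Hj. unfold shift, splice.
  destruct (Nat.leb_spec (S N + j) N); [lia|].
  destruct (Nat.eqb_spec (S N + j) (S N)); [lia|]. f_equal; lia.
Qed.

Lemma negaQ_sum_splice_self Q e N :
  negaQ_sum Q (splice e N (e (S N)) (shift e (S N))) = negaQ_sum Q e.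
Proof.
  apply negaQ_sum_ext; intros k _. unfold splice, shift.
  destruct (Nat.leb_spec k N); [reflexivity|].
  destruct (Nat.eqb_spec k (S N)) as [->|]; [reflexivity|]. f_equal; lia.
Qed.

Lemma negaQ_sum_splice_sub Q e N d t1 t2 : bases_ge2 Q ->
  (forall k, (1 <= k <= N)%nat -> (e k < Q k)%nat) -> (S d < Q (S N))%nat ->
  admissible (shift Q (S N)) t1 -> admissible (shift Q (S N)) t2 ->
  negaQ_sum Q (splice e N (S d) t1) - negaQ_sum Q (splice e N d t2)
  = (-1) ^ N * (negaQ_sum (shift Q (S N)) t2 - negaQ_sum (shift Q (S N)) t1 - 1) / Qprod Q (S N).
Proof.
  intros HQ He Hd Ht1 Ht2.
  assert (Ha1 : admissible Q (splice e N (S d) t1)) by (apply admissible_splice; auto).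
  assert (Ha2 : admissible Q (splice e N d t2)) by (apply admissible_splice; auto; lia).
  rewrite (negaQ_sum_sub_prefix Q _ _ N) by (auto; intros; rewrite !splice_prefix by lia; auto).
  pose proof (tail_sum_step Q _ N HQ Ha1) as H1. pose proof (tail_sum_step Q _ N HQ Ha2) as H2.
  rewrite splice_digit, tail_sum_splice in H1, H2. rewrite S_INR in H1.
  pose proof (INR_base_ge2 Q (S N) HQ ltac:(lia)). pose proof (Qprod_pos Q N HQ).
  replace (tail_sum Q (splice e N (S d) t1) N - tail_sum Q (splice e N d t2) N) with
    ((negaQ_sum (shift Q (S N)) t2 - negaQ_sum (shift Q (S N)) t1 - 1) / INR (Q (S N))).
  - simpl Qprod. field; lra.
  - apply Rmult_eq_reg_l with (INR (Q (S N))); [|lra].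
    rewrite Rmult_minus_distr_l, H1, H2. field; lra.
Qed.

(* The two expansions of a nega-Q-rational point: digit d+1 followed by [q-1] 0 [q-1] 0 ...,
   and digit d followed by 0 [q-1] 0 [q-1] ... *)
Lemma negaQ_sum_splice_bot_top Q e N d : bases_ge2 Q ->
  (forall k, (1 <= k <= N)%nat -> (e k < Q k)%nat) -> (S d < Q (S N))%nat ->
  negaQ_sum Q (splice e N (S d) (bot_digits (shift Q (S N))))
  = negaQ_sum Q (splice e N d (top_digits (shift Q (S N)))).
Proof.
  intros HQ He Hd. apply Rminus_diag_uniq.
  rewrite negaQ_sum_splice_sub by auto using bases_ge2_shift, admissible_bot_digits,
    admissible_top_digits.
  pose proof (tail_max_sub_min Q (S N) HQ) as H1. unfold tail_max, tail_min in H1.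
  rewrite H1; unfold Rdiv; ring.
Qed.

(* Digit N+1 of [e] survives small perturbations of the value: replacing it by a neighbouring
   digit would require the tail behind it to be extremal. *)
Definition digit_rigid (Q e : nat -> nat) (N : nat) : Prop :=
  ((e (S N) + 1 < Q (S N))%nat -> tail_sum Q e (S N) < tail_max Q (S N)) /\
  ((1 <= e (S N))%nat -> tail_min Q (S N) < tail_sum Q e (S N)).

Lemma tail_sum_sub_of_digit_lt Q e e' N : bases_ge2 Q -> admissible Q e -> admissible Q e' ->
  (e (S N) < e' (S N))%nat ->
  tail_max Q (S N) - tail_sum Q e (S N) <= INR (Q (S N)) * (tail_sum Q e N - tail_sum Q e' N).
Proof.
  intros HQ He He' Hlt. rewrite Rmult_minus_distr_l, !tail_sum_step by auto.
  pose proof (tail_sum_bounds Q e' (S N) HQ He'). pose proof (tail_max_sub_min Q (S N) HQ).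
  assert (INR (e (S N)) + 1 <= INR (e' (S N))) by (rewrite <- S_INR; apply le_INR; lia).
  lra.
Qed.

Lemma tail_sum_sub_of_digit_gt Q e e' N : bases_ge2 Q -> admissible Q e -> admissible Q e' ->
  (e' (S N) < e (S N))%nat ->
  tail_sum Q e (S N) - tail_min Q (S N) <= INR (Q (S N)) * (tail_sum Q e' N - tail_sum Q e N).
Proof.
  intros HQ He He' Hlt. rewrite Rmult_minus_distr_l, !tail_sum_step by auto.
  pose proof (tail_sum_bounds Q e' (S N) HQ He'). pose proof (tail_max_sub_min Q (S N) HQ).
  assert (INR (e' (S N)) + 1 <= INR (e (S N))) by (rewrite <- S_INR; apply le_INR; lia).
  lra.
Qed.

Lemma digit_gap Q e N : bases_ge2 Q -> admissible Q e -> digit_rigid Q e N ->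
  exists g, 0 < g /\ forall e', admissible Q e' -> e' (S N) <> e (S N) ->
    g <= Rabs (tail_sum Q e' N - tail_sum Q e N).
Proof.
  intros HQ He [Hup Hdown]. pose proof (INR_base_ge2 Q (S N) HQ ltac:(lia)).
  set (gu := if (e (S N) + 1 <? Q (S N))%nat then tail_max Q (S N) - tail_sum Q e (S N) else 1).
  set (gd := if (1 <=? e (S N))%nat then tail_sum Q e (S N) - tail_min Q (S N) else 1).
  assert (Hgu : 0 < gu).
  { unfold gu; destruct (Nat.ltb_spec (e (S N) + 1) (Q (S N))) as [Hd|]; [specialize (Hup Hd)|]; lra. }
  assert (Hgd : 0 < gd).
  { unfold gd; destruct (Nat.leb_spec 1 (e (S N))) as [Hd|]; [specialize (Hdown Hd)|]; lra. }
  exists (Rmin gu gd / INR (Q (S N))).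
  split; [apply Rdiv_lt_0_compat; [apply Rmin_pos|]; lra|].
  intros e' He' Hne. apply Rmult_le_reg_l with (INR (Q (S N))); [lra|].
  replace (INR (Q (S N)) * (Rmin gu gd / INR (Q (S N)))) with (Rmin gu gd) by (field; lra).
  pose proof (Rmin_l gu gd). pose proof (Rmin_r gu gd).
  set (D := tail_sum Q e' N - tail_sum Q e N).
  assert (Habs : INR (Q (S N)) * D <= INR (Q (S N)) * Rabs D /\
                 INR (Q (S N)) * - D <= INR (Q (S N)) * Rabs D).
  { split; apply Rmult_le_compat_l; [lra|apply Rle_abs|lra|rewrite <- Rabs_Ropp; apply Rle_abs]. }
  apply Nat.lt_gt_cases in Hne as [Hlt|Hgt].
  - pose proof (tail_sum_sub_of_digit_gt Q e e' N HQ He He' Hlt).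
    assert (gd = tail_sum Q e (S N) - tail_min Q (S N))
      by (unfold gd; destruct (Nat.leb_spec 1 (e (S N))); [reflexivity|lia]).
    unfold D in *. lra.
  - pose proof (tail_sum_sub_of_digit_lt Q e e' N HQ He He' Hgt).
    assert (gu = tail_max Q (S N) - tail_sum Q e (S N))
      by (unfold gu; specialize (He' (S N)); destruct (Nat.ltb_spec (e (S N) + 1) (Q (S N)));
          [reflexivity|lia]).
    unfold D in *. lra.
Qed.

Lemma prefix_stable Q e N : bases_ge2 Q -> admissible Q e ->
  (forall k, (k < N)%nat -> digit_rigid Q e k) ->
  exists delta, 0 < delta /\ forall e', admissible Q e' ->
    Rabs (negaQ_sum Q e' - negaQ_sum Q e) < delta -> forall k, (1 <= k <= N)%nat -> e' k = e k.
Proof.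
  intros HQ He; induction N as [|N IH]; intros Hrig.
  - exists 1; split; [lra|]; intros; lia.
  - destruct IH as [delta [Hdelta Hpre]]; [intros; apply Hrig; lia|].
    destruct (digit_gap Q e N HQ He (Hrig N ltac:(lia))) as [g [Hg Hgap]].
    pose proof (Qprod_pos Q N HQ).
    exists (Rmin delta (g / Qprod Q N)).
    split; [apply Rmin_pos; [lra|apply Rdiv_lt_0_compat; lra]|].
    intros e' He' Hclose k Hk.
    pose proof (Rmin_l delta (g / Qprod Q N)). pose proof (Rmin_r delta (g / Qprod Q N)).
    assert (Hpre' : forall j, (1 <= j <= N)%nat -> e' j = e j) by (apply Hpre; auto; lra).
    destruct (Nat.eq_dec k (S N)) as [->|Hne]; [|apply Hpre'; lia].
    destruct (Nat.eq_dec (e' (S N)) (e (S N))) as [E|Hdig]; [exact E|exfalso].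
    specialize (Hgap e' He' Hdig).
    rewrite (negaQ_sum_sub_prefix Q e' e N), Rabs_rescaled in Hclose by auto.
    assert (g / Qprod Q N <= Rabs (tail_sum Q e' N - tail_sum Q e N) / Qprod Q N)
      by (unfold Rdiv; apply Rmult_le_compat_r; [apply Rlt_le, Rinv_0_lt_compat|]; lra).
    lra.
Qed.

Lemma negaQ_sum_splice_up Q e N : bases_ge2 Q -> admissible Q e ->
  (e (S N) + 1 < Q (S N))%nat -> tail_sum Q e (S N) = tail_max Q (S N) ->
  negaQ_sum Q (splice e N (S (e (S N))) (bot_digits (shift Q (S N)))) = negaQ_sum Q e.
Proof.
  intros HQ He Hd Htop. rewrite <- (negaQ_sum_splice_self Q e N).
  apply Rminus_diag_uniq.
  rewrite negaQ_sum_splice_sub by (auto using bases_ge2_shift, admissible_bot_digits,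
    admissible_shift; first [intros; apply He; lia|lia]).
  pose proof (tail_max_sub_min Q (S N) HQ) as Hunit.
  unfold tail_sum, tail_max, tail_min in Htop, Hunit. rewrite Htop.
  replace (_ - _ - 1) with 0 by lra. unfold Rdiv; ring.
Qed.

Lemma negaQ_sum_splice_down Q e N : bases_ge2 Q -> admissible Q e ->
  (1 <= e (S N))%nat -> tail_sum Q e (S N) = tail_min Q (S N) ->
  negaQ_sum Q (splice e N (e (S N) - 1) (top_digits (shift Q (S N)))) = negaQ_sum Q e.
Proof.
  intros HQ He Hd Hbot. rewrite <- (negaQ_sum_splice_self Q e N).
  replace (splice e N (e (S N)) (shift e (S N)))
    with (splice e N (S (e (S N) - 1)) (shift e (S N))) by (f_equal; lia).
  symmetry; apply Rminus_diag_uniq.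
  rewrite negaQ_sum_splice_sub by (auto using bases_ge2_shift, admissible_top_digits,
    admissible_shift; first [intros; apply He; lia|specialize (He (S N)); lia]).
  pose proof (tail_max_sub_min Q (S N) HQ) as Hunit.
  unfold tail_sum, tail_max, tail_min in Hbot, Hunit. rewrite Hbot.
  replace (_ - _ - 1) with 0 by lra. unfold Rdiv; ring.
Qed.

Lemma digit_rigid_of_unique Q e N : bases_ge2 Q -> admissible Q e ->
  (forall e', admissible Q e' -> negaQ_sum Q e' = negaQ_sum Q e ->
     forall k, (1 <= k)%nat -> e' k = e k) ->
  digit_rigid Q e N.
Proof.
  intros HQ He Huniq.
  assert (Hpre : forall k, (1 <= k <= N)%nat -> (e k < Q k)%nat) by (intros; apply He; lia).
  pose proof (tail_sum_bounds Q e (S N) HQ He). pose proof (He (S N) ltac:(lia)).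
  split; intros Hd.
  - destruct (Rlt_or_le (tail_sum Q e (S N)) (tail_max Q (S N))) as [Hlt|Hge]; [exact Hlt|exfalso].
    assert (Hdig := Huniq _ (admissible_splice Q e N (S (e (S N))) _ Hpre ltac:(lia)
      (admissible_bot_digits _ _ (bases_ge2_shift Q _ HQ) (fun _ _ => le_n _)))
      (negaQ_sum_splice_up Q e N HQ He Hd ltac:(lra)) (S N) ltac:(lia)).
    rewrite splice_digit in Hdig. lia.
  - destruct (Rlt_or_le (tail_min Q (S N)) (tail_sum Q e (S N))) as [Hlt|Hge]; [exact Hlt|exfalso].
    assert (Hdig := Huniq _ (admissible_splice Q e N (e (S N) - 1) _ Hpre ltac:(lia)
      (admissible_top_digits _ _ (bases_ge2_shift Q _ HQ) (fun _ _ => le_n _)))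
      (negaQ_sum_splice_down Q e N HQ He Hd ltac:(lra)) (S N) ltac:(lia)).
    rewrite splice_digit in Hdig. lia.
Qed.

Lemma tail_sum_interior_step Q e n : bases_ge2 Q -> admissible Q e ->
  tail_min Q (S n) < tail_sum Q e (S n) < tail_max Q (S n) ->
  tail_min Q n < tail_sum Q e n < tail_max Q n.
Proof.
  intros HQ He Hint.
  pose proof (tail_sum_step Q e n HQ He). pose proof (tail_max_step Q n HQ).
  pose proof (tail_min_step Q n HQ). pose proof (INR_base_ge2 Q (S n) HQ ltac:(lia)).
  pose proof (pos_INR (e (S n))).
  assert (INR (e (S n)) + 1 <= INR (Q (S n)))
    by (rewrite <- S_INR; apply le_INR; specialize (He (S n)); lia).
  split; apply Rmult_lt_reg_l with (INR (Q (S n))); lra.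
Qed.

Definition truncate (s : nat -> nat) (N : nat) : nat -> nat :=
  fun k => if (k <=? N)%nat then s k else 0%nat.

Lemma truncate_prefix s N k : (k <= N)%nat -> truncate s N k = s k.
Proof. intros Hk; unfold truncate; destruct (Nat.leb_spec k N); [reflexivity|lia]. Qed.

Lemma admissible_truncate Q s N : bases_ge2 Q -> admissible Q s -> admissible Q (truncate s N).
Proof.
  intros HQ Hs k Hk. unfold truncate. destruct (k <=? N)%nat; [auto|specialize (HQ k Hk); lia].
Qed.

Lemma truncate_interior Q s N k : bases_ge2 Q -> admissible Q s -> (k <= N)%nat ->
  tail_min Q k < tail_sum Q (truncate s N) k < tail_max Q k.
Proof.
  intros HQ Hs Hk. replace k with (N - (N - k))%nat by lia. induction (N - k)%nat as [|i IH].
  - rewrite Nat.sub_0_r. replace (tail_sum Q (truncate s N) N) with 0.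
    + apply tail_min_neg_tail_max_pos; auto.
    + rewrite <- (negaQ_sum_zero (shift Q N)). apply negaQ_sum_ext; intros j Hj.
      unfold shift, truncate. destruct (Nat.leb_spec (N + j) N); [lia|reflexivity].
  - destruct (Nat.le_gt_cases N i) as [Hle|Hgt].
    + replace (N - S i)%nat with (N - i)%nat by lia. exact IH.
    + apply tail_sum_interior_step; auto using admissible_truncate.
      replace (S (N - S i)) with (N - i)%nat by lia. exact IH.
Qed.

(** * The map f *)

Definition const_bases (q : nat) : nat -> nat := fun _ => q.

Lemma bases_ge2_const q : (2 <= q)%nat -> bases_ge2 (const_bases q).
Proof. intros Hq k _; exact Hq. Qed.

Lemma admissible_const_bases Q q e : (forall k, (1 <= k)%nat -> (Q k <= q)%nat) ->
  admissible Q e -> admissible (const_bases q) e.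
Proof. intros HQq He k Hk. specialize (HQq k Hk); specialize (He k Hk); unfold const_bases; lia. Qed.

Lemma negaq_value_eq q a : (2 <= q)%nat -> admissible (const_bases q) a ->
  negaq_value q a = negaQ_sum (const_bases q) a.
Proof.
  intros Hq Ha. unfold negaq_value. apply series_sum_eq.
  apply (is_series_ext (fun k => negaQ_term (const_bases q) a (S k))).
  2:{ apply Series_correct, ex_series_negaQ; auto using bases_ge2_const. }
  intros k. match goal with |- ?u = ?v => change (@eq R u v) end. unfold negaQ_term.
  assert (Hprod : forall n, Qprod (const_bases q) n = INR q ^ n)
    by (induction n as [|n IH]; simpl; [|rewrite IH; unfold const_bases]; ring).
  assert (0 < INR q) by (apply lt_0_INR; lia).
  rewrite Hprod. replace (- INR q) with (-1 * INR q) by ring. rewrite Rpow_mult_distr.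
  assert ((-1) ^ S k * (-1) ^ S k = 1)
    by (rewrite <- Rpow_mult_distr; replace (-1 * -1) with 1 by ring; apply pow1).
  pose proof (pow_lt (INR q) (S k) H). pose proof (pow_nonzero (-1) (S k) ltac:(lra)).
  rewrite <- (Rmult_1_l (INR (a (S k)))) at 2. rewrite <- H0. field; split; lra.
Qed.

Lemma fQ_eq Q q y : bases_ge2 Q -> (2 <= q)%nat -> (forall k, (1 <= k)%nat -> (Q k <= q)%nat) ->
  in_dom Q y -> fQ Q q y = negaQ_sum (const_bases q) (chosen_repr Q y).
Proof.
  intros HQ Hq HQq Hy. apply negaq_value_eq; auto.
  apply (admissible_const_bases Q); auto. apply chosen_repr_spec; auto.
Qed.

Lemma fQ_sub_close Q q e y N : bases_ge2 Q -> (2 <= q)%nat ->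
  (forall k, (1 <= k)%nat -> (Q k <= q)%nat) -> admissible Q e -> in_dom Q y ->
  (forall k, (1 <= k <= N)%nat -> chosen_repr Q y k = e k) ->
  Rabs (fQ Q q y - negaQ_sum (const_bases q) e) <= (/ 2) ^ N.
Proof.
  intros HQ Hq HQq He Hy Hpre. rewrite fQ_eq by auto.
  apply negaQ_sum_close; auto using bases_ge2_const.
  all: apply (admissible_const_bases Q); auto; apply chosen_repr_spec; auto.
Qed.

Lemma fQ_approx Q q s : bases_ge2 Q -> (2 <= q)%nat ->
  (forall k, (1 <= k)%nat -> (Q k <= q)%nat) -> admissible Q s ->
  forall N, exists y, in_dom Q y /\ Rabs (y - negaQ_sum Q s) <= (/ 2) ^ N /\
    Rabs (fQ Q q y - negaQ_sum (const_bases q) s) <= (/ 2) ^ N.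
Proof.
  intros HQ Hq HQq Hs N. set (g := truncate s N).
  assert (Hg : admissible Q g) by (apply admissible_truncate; auto).
  assert (Hgs : forall k, (1 <= k <= N)%nat -> g k = s k) by (intros; apply truncate_prefix; lia).
  exists (negaQ_sum Q g). split; [apply in_dom_negaQ_sum; auto|split].
  - apply negaQ_sum_close; auto.
  - assert (Hy : in_dom Q (negaQ_sum Q g)) by (apply in_dom_negaQ_sum; auto).
    destruct (chosen_repr_spec Q _ HQ Hy) as [Hc Hcv].
    destruct (prefix_stable Q g N HQ Hg) as [delta [Hdelta Hstable]].
    { intros k Hk. pose proof (truncate_interior Q s N (S k) HQ Hs Hk) as Hint. fold g in Hint.
      unfold digit_rigid; split; intros; lra. }
    apply fQ_sub_close; auto. intros k Hk.
    rewrite <- Hgs by auto. apply Hstable; auto. rewrite Hcv, Rminus_diag_eq, Rabs_R0; auto.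
Qed.

Lemma cont_rel_value_of_approx D g x0 L :
  (forall N, exists y, D y /\ Rabs (y - x0) <= (/ 2) ^ N /\ Rabs (g y - L) <= (/ 2) ^ N) ->
  cont_rel D g x0 -> g x0 = L.
Proof.
  intros Happrox Hcont. apply Rminus_diag_uniq.
  destruct (Req_dec (g x0 - L) 0) as [E|E]; [exact E|exfalso].
  set (eps := Rabs (g x0 - L) / 2). assert (Heps : 0 < eps) by (apply Rabs_pos_lt in E; unfold eps; lra).
  destruct (Hcont eps Heps) as [delta [Hdelta Hclose]].
  destruct (pow_half_lt (Rmin delta eps) (Rmin_pos _ _ Hdelta Heps)) as [N HN].
  pose proof (Rmin_l delta eps). pose proof (Rmin_r delta eps).
  destruct (Happrox N) as [y [Hy [Hyx HgyL]]].
  specialize (Hclose y Hy ltac:(lra)).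
  pose proof (Rabs_triang (g x0 - g y) (g y - L)). rewrite Rabs_minus_sym in Hclose.
  replace (g x0 - g y + (g y - L)) with (g x0 - L) in H1 by ring. unfold eps in *. lra.
Qed.

Lemma fQ_cont_irrational Q q x : bases_ge2 Q -> (2 <= q)%nat ->
  (forall k, (1 <= k)%nat -> (Q k <= q)%nat) -> in_dom Q x -> ~ negaQ_rational Q x ->
  cont_rel (in_dom Q) (fQ Q q) x.
Proof.
  intros HQ Hq HQq Hx Hirr.
  destruct (chosen_repr_spec Q x HQ Hx) as [He Hv]. set (e := chosen_repr Q x) in *.
  assert (Hrigid : forall N, digit_rigid Q e N).
  { intros N; apply digit_rigid_of_unique; auto. intros e' He' Hv' k Hk.
    destruct (Nat.eq_dec (e' k) (e k)) as [E|E]; [exact E|exfalso; apply Hirr].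
    exists e', e. rewrite !negaQ_repr_iff by auto.
    split; [split; [auto|congruence]|]. split; [auto|]. exists k; auto. }
  intros eps Heps. destruct (pow_half_lt eps Heps) as [N HN].
  destruct (prefix_stable Q e N HQ He (fun k _ => Hrigid k)) as [delta [Hdelta Hstable]].
  exists delta; split; auto. intros y Hy Hyx.
  destruct (chosen_repr_spec Q y HQ Hy) as [Hey Hvy].
  rewrite (fQ_eq Q q x) by auto. fold e.
  eapply Rle_lt_trans; [|exact HN]. apply fQ_sub_close; auto.
  apply Hstable; auto. rewrite Hvy, Hv; exact Hyx.
Qed.

Lemma fQ_id_of_const_bases Q q y : bases_ge2 Q -> (forall n, (1 <= n)%nat -> Q n = q) ->
  in_dom Q y -> fQ Q q y = y.
Proof.
  intros HQ HQq Hy. assert (Hq : (2 <= q)%nat) by (rewrite <- (HQq 1%nat); auto).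
  rewrite fQ_eq by (auto; intros k Hk; rewrite HQq; auto).
  destruct (chosen_repr_spec Q y HQ Hy) as [_ Hv]. rewrite <- Hv at 2.
  apply negaQ_sum_ext_bases; intros k Hk; symmetry; auto.
Qed.

Lemma negaQ_sum_const_top_sub_bot_lt Q' q j : (2 <= q)%nat ->
  (forall k, (1 <= k)%nat -> (Q' k <= q)%nat) -> (1 <= j)%nat -> (Q' j < q)%nat ->
  negaQ_sum (const_bases q) (top_digits Q') - negaQ_sum (const_bases q) (bot_digits Q') < 1.
Proof.
  intros Hq HQ' Hj HQ'j. pose proof (bases_ge2_const q Hq) as Hc.
  rewrite negaQ_sum_top_sub_bot by auto.
  rewrite <- (is_series_unique _ _ (is_series_base_telescoping _ Hc)).
  assert (Hle : forall k, INR (Q' (S k) - 1) / Qprod (const_bases q) (S k)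
                          <= INR (const_bases q (S k) - 1) / Qprod (const_bases q) (S k)).
  { intros k. unfold Rdiv. apply Rmult_le_compat_r.
    - apply Rlt_le, Rinv_0_lt_compat, Qprod_pos; auto.
    - apply le_INR. specialize (HQ' (S k) ltac:(lia)). unfold const_bases; lia. }
  assert (Hex : ex_series (fun k => INR (const_bases q (S k) - 1) / Qprod (const_bases q) (S k)))
    by (eexists; apply is_series_base_telescoping; auto).
  apply (Series_lt_compat _ _ (pred j)); auto.
  - replace (S (pred j)) with j by lia. unfold Rdiv. apply Rmult_lt_compat_r.
    + apply Rinv_0_lt_compat, Qprod_pos; auto.
    + apply lt_INR. unfold const_bases; lia.
  - apply (@ex_series_le R_AbsRing R_CompleteNormedModule _
      (fun k => INR (const_bases q (S k) - 1) / Qprod (const_bases q) (S k))); auto. intros k.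
    eapply Rle_trans; [apply Req_le, Rabs_pos_eq|apply Hle].
    unfold Rdiv; apply Rmult_le_pos; [apply pos_INR|].
    apply Rlt_le, Rinv_0_lt_compat, Qprod_pos; auto.
Qed.

Lemma first_form_seq_splice Q e N : (1 <= e (S N))%nat ->
  first_form_seq Q e (S N) = splice e N (S (e (S N) - 1)) (bot_digits (shift Q (S N))).
Proof.
  intros He. apply functional_extensionality; intros k. unfold first_form_seq, splice.
  destruct (Nat.leb_spec k N); [destruct (Nat.leb_spec k (S N)); [reflexivity|lia]|].
  destruct (Nat.eqb_spec k (S N)) as [->|Hne].
  - rewrite Nat.leb_refl; lia.
  - destruct (Nat.leb_spec k (S N)); [lia|]. unfold bot_digits, shift.
    replace (S N + (k - S N))%nat with k by lia.
    rewrite <- Nat.negb_even. destruct (Nat.even (k - S N)); reflexivity.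
Qed.

Lemma negaQ_sum_const_splice_neq Q q e N d n : (2 <= q)%nat ->
  (forall k, (1 <= k)%nat -> (Q k <= q)%nat) ->
  (forall k, (1 <= k <= N)%nat -> (e k < Q k)%nat) -> (S d < Q (S N))%nat ->
  (S N < n)%nat -> (Q n < q)%nat ->
  negaQ_sum (const_bases q) (splice e N (S d) (bot_digits (shift Q (S N))))
  <> negaQ_sum (const_bases q) (splice e N d (top_digits (shift Q (S N)))).
Proof.
  intros Hq HQq Hpre Hd Hn HQn Heq. pose proof (bases_ge2_const q Hq) as Hc.
  assert (Hcq : forall k, (1 <= k)%nat -> (shift Q (S N) k <= q)%nat)
    by (intros; apply HQq; lia).
  apply Rminus_diag_eq in Heq.
  rewrite negaQ_sum_splice_sub in Heq; auto using admissible_bot_digits, admissible_top_digits.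
  - apply rescaled_eq_0 in Heq; [|apply Qprod_pos; auto].
    pose proof (negaQ_sum_const_top_sub_bot_lt (shift Q (S N)) q (n - S N) Hq Hcq ltac:(lia)
      ltac:(unfold shift; replace (S N + (n - S N))%nat with n by lia; auto)).
    change (shift (const_bases q) (S N)) with (const_bases q) in Heq. lra.
  - intros k Hk. specialize (Hpre k Hk); specialize (HQq k ltac:(lia)); unfold const_bases; lia.
  - specialize (HQq (S N) ltac:(lia)); unfold const_bases; lia.
Qed.

Lemma fQ_discont_rational Q q e m : bases_ge2 Q -> (2 <= q)%nat ->
  (forall k, (1 <= k)%nat -> (Q k <= q)%nat) -> (1 <= m)%nat ->
  (forall k, (1 <= k <= m)%nat -> (e k < Q k)%nat) -> (1 <= e m)%nat ->
  (exists n, (m < n)%nat /\ (Q n < q)%nat) ->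
  ~ cont_rel (in_dom Q) (fQ Q q) (negaQ_value Q (first_form_seq Q e m)).
Proof.
  intros HQ Hq HQq Hm He Hem [n [Hmn Hn]] Hcont.
  destruct m as [|N]; [lia|]. rewrite first_form_seq_splice in Hcont by auto.
  set (d := (e (S N) - 1)%nat) in *.
  assert (Hpre : forall k, (1 <= k <= N)%nat -> (e k < Q k)%nat) by (intros; apply He; lia).
  assert (Hd : (S d < Q (S N))%nat) by (unfold d; specialize (He (S N)); lia).
  assert (He1 : admissible Q (splice e N (S d) (bot_digits (shift Q (S N)))))
    by (apply admissible_splice; auto using admissible_bot_digits, bases_ge2_shift).
  assert (He2 : admissible Q (splice e N d (top_digits (shift Q (S N)))))
    by (apply admissible_splice; auto using admissible_top_digits, bases_ge2_shift; lia).
  rewrite negaQ_value_eq in Hcont by auto.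
  pose proof (cont_rel_value_of_approx _ _ _ _ (fQ_approx Q q _ HQ Hq HQq He1) Hcont) as Hf1.
  rewrite negaQ_sum_splice_bot_top in Hcont, Hf1 by auto.
  pose proof (cont_rel_value_of_approx _ _ _ _ (fQ_approx Q q _ HQ Hq HQq He2) Hcont) as Hf2.
  apply (negaQ_sum_const_splice_neq Q q e N d n); auto. congruence.
Qed.

Theorem theorem3 (Q : nat -> nat) (q : nat)
  (Hq : (2 <= q)%nat)
  (HQ : forall k, (1 <= k)%nat -> (2 <= Q k)%nat /\ (Q k <= q)%nat) :
  (forall x, in_dom Q x -> ~ negaQ_rational Q x ->
     cont_rel (in_dom Q) (fQ Q q) x) /\
  ((forall n, (1 <= n)%nat -> Q n = q) ->
     forall x, in_dom Q x -> cont_rel (in_dom Q) (fQ Q q) x) /\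
  (forall (e : nat -> nat) (m : nat),
     (1 <= m)%nat ->
     (forall k, (1 <= k <= m)%nat -> (e k < Q k)%nat) ->
     (1 <= e m)%nat ->
     (exists n, (m < n)%nat /\ (Q n < q)%nat) ->
     ~ cont_rel (in_dom Q) (fQ Q q) (negaQ_value Q (first_form_seq Q e m))).
Proof.
  assert (HQ2 : bases_ge2 Q) by (intros k Hk; apply HQ; auto).
  assert (HQq : forall k, (1 <= k)%nat -> (Q k <= q)%nat) by (intros k Hk; apply HQ; auto).
  split; [|split].
  - intros x Hx Hirr. apply fQ_cont_irrational; auto.
  - intros Hconst x Hx eps Heps. exists eps; split; [exact Heps|]. intros y Hy Hyx.
    rewrite !fQ_id_of_const_bases by auto. exact Hyx.
  - intros e m Hm He Hem Hn. apply fQ_discont_rational; auto.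
Qed.
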